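(* Every complete multipartite graph with at least two nonempty parts admits an antimagic orientation.
   Context: A complete multipartite graph is a simple graph whose vertex set is partitioned into parts such that two vertices are adjacent if and only if they lie in different parts. For a digraph $D$ and an injective map $\tau$ from the arc set $A(D)$ to positive integers, $s_{(D,\tau)}(u)$ is the sum of labels of arcs entering $u$ minus the sum of labels of arcs leaving $u$ ($0$ if $u$ is isolated). If $D$ has $m$ arcs, a bijection $\tau:A(D)\to\{1,\dots,m\}$ is an antimagic labeling if the values $s_{(D,\tau)}(u)$ are pairwise distinct over all vertices. A graph admits an antimagic orientation if some orientation $D$ of it has an antimagic labeling. *)

From mathcomp Require Import all_boot all_order all_algebra.
Set Implicit Arguments. Unset Strict Implicit. Unset Printing Implicit Defensive.
Import Order.TTheory GRing.Theory Num.Theory.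

Definition cmp_adj (V P : finType) (part : V -> P) : rel V :=
  fun u v => part u != part v.

Definition is_orientation (V : finType) (adj : rel V) (arc : rel V) : Prop :=
  (forall u v, arc u v -> adj u v) /\
  (forall u v, adj u v -> (arc u v (+) arc v u)).

Definition arcs (V : finType) (arc : rel V) : {set V * V} :=
  [set e | arc e.1 e.2].

Definition vsum (V : finType) (arc : rel V) (tau : V * V -> nat) (u : V) : int :=
  (\sum_(e in arcs arc | e.2 == u) (tau e)%:Z
   - \sum_(e in arcs arc | e.1 == u) (tau e)%:Z)%R.

Definition is_labeling (V : finType) (arc : rel V) (tau : V * V -> nat) : Prop :=
  {in arcs arc &, injective tau} /\
  (forall e, e \in arcs arc -> 1 <= tau e <= #|arcs arc|).

Definition antimagic_labeling (V : finType) (arc : rel V) (tau : V * V -> nat) : Prop :=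
  is_labeling arc tau /\ injective (vsum arc tau).

Definition has_antimagic_orientation (V : finType) (adj : rel V) : Prop :=
  exists (arc : rel V) (tau : V * V -> nat),
    is_orientation adj arc /\ antimagic_labeling arc tau.

From mathcomp Require Import all_boot all_order all_algebra.
From mathcomp Require Import zify.
Set Implicit Arguments. Unset Strict Implicit. Unset Printing Implicit Defensive.

(* Enumerate the parts and the vertices, and give each vertex x the key
   key x = (rank of its part) * |V| + (rank of x), so that keys are distinct
   and sorted first by part.  Orient every edge from the part of smaller rank
   to the part of larger rank.  Label the arcs 1, ..., m in increasing order of
   the weight  (C - key tail) * C + key head  (C bounds all keys): the label of
   an arc decreases strictly with its tail key and increases strictly with its
   head key.  Hence, when key x < key y, every in-label of x is dominated by
   the corresponding in-label of y and every out-label of y by the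
   corresponding out-label of x; a vertex z outside the part of y makes one
   comparison strict (z -> y if z lies below y, x -> z otherwise).  So the
   vertex sum is strictly increasing in the key, hence injective. *)

Lemma sum_ltn_point (T : finType) (f g : T -> nat) (z : T) :
  (forall x, f x <= g x) -> f z < g z -> \sum_x f x < \sum_x g x.
Proof.
move=> fg fz; rewrite (bigD1 z) //= [X in _ < X](bigD1 z) //=.
by rewrite -addSn leq_add // leq_sum.
Qed.

Section Ranking.
Variables (T : finType) (A : {set T}) (w : T -> nat).

Definition rank_in (e : T) : nat := #|[set e' in A | w e' <= w e]|.

Lemma rank_in_lt e e' : e' \in A -> w e < w e' -> rank_in e < rank_in e'.
Proof.
move=> Ae' lt_ee'; apply/proper_card/properP; split.
  apply/subsetP => f; rewrite !inE => /andP[-> le_fe].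
  exact: leq_trans le_fe (ltnW lt_ee').
by exists e'; rewrite !inE Ae' ?leqnn // -ltnNge.
Qed.

Lemma rank_in_gt0 e : e \in A -> 0 < rank_in e.
Proof. by move=> Ae; apply/card_gt0P; exists e; rewrite inE Ae leqnn. Qed.

Lemma rank_in_le_card e : rank_in e <= #|A|.
Proof. by apply/subset_leq_card/subsetP => f; rewrite inE => /andP[]. Qed.

Lemma rank_in_inj : {in A &, injective w} -> {in A &, injective rank_in}.
Proof.
move=> w_inj e e' Ae Ae' eq_rank; apply: w_inj => //.
have [lt|lt|//] := ltngtP (w e) (w e').
  by have := rank_in_lt Ae' lt; rewrite eq_rank ltnn.
by have := rank_in_lt Ae lt; rewrite eq_rank ltnn.
Qed.
End Ranking.

Lemma rank_is_labeling (V : finType) (arc : rel V) (w : V * V -> nat) :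
  injective w -> is_labeling arc (rank_in (arcs arc) w).
Proof.
move=> w_inj; split; first by apply: rank_in_inj => e e' _ _ /w_inj.
by move=> e Ae; rewrite rank_in_gt0 ?rank_in_le_card.
Qed.

Section VertexSums.
Variables (V : finType) (arc : rel V) (tau : V * V -> nat).

Definition arc_label (u v : V) : nat := if arc u v then tau (u, v) else 0.

Definition in_weight (y : V) : nat := \sum_u arc_label u y.
Definition out_weight (x : V) : nat := \sum_v arc_label x v.

Lemma sum_arcs_pair (F : V -> V -> bool) :
  \sum_(e in arcs arc | F e.1 e.2) tau e =
  \sum_u \sum_v (if F u v then arc_label u v else 0).
Proof.
rewrite big_mkcond [RHS]pair_big; apply: eq_bigr => -[u v] _.
by rewrite inE /arc_label; case: (arc u v); case: (F u v).
Qed.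

Lemma sum_arcs_head y :
  \sum_(e in arcs arc | e.2 == y) tau e = in_weight y.
Proof.
rewrite (sum_arcs_pair (fun _ v => v == y)); apply: eq_bigr => u _.
by rewrite (bigD1 y) //= eqxx big1 ?addn0 // => v /negbTE ->.
Qed.

Lemma sum_arcs_tail x :
  \sum_(e in arcs arc | e.1 == x) tau e = out_weight x.
Proof.
rewrite (sum_arcs_pair (fun u _ => u == x)) (bigD1 x) //= [X in _ + X]big1 ?addn0.
  by apply: eq_bigr => v _; rewrite eqxx.
by move=> u /negbTE ne_ux; apply: big1 => v _; rewrite ne_ux.
Qed.

Lemma vsumE x : vsum arc tau x = ((in_weight x)%:Z - (out_weight x)%:Z)%R.
Proof.
rewrite /vsum -sum_arcs_head -sum_arcs_tail.
by rewrite !(big_morph Posz PoszD (erefl (Posz 0))).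
Qed.
End VertexSums.

Definition level_arc (V : finType) (lvl : V -> nat) : rel V :=
  fun u v => lvl u < lvl v.

Lemma level_orientation (V : finType) (adj : rel V) (lvl : V -> nat) :
  (forall u v, adj u v = (lvl u != lvl v)) -> is_orientation adj (level_arc lvl).
Proof.
move=> adjE; split=> u v; rewrite adjE /level_arc.
  by rewrite neq_ltn => ->.
by case: ltngtP.
Qed.

Lemma radix_inj (C a b a' b' : nat) :
  b < C -> b' < C -> a * C + b = a' * C + b' -> a = a' /\ b = b'.
Proof.
move=> ltbC ltb'C eq_ab.
have C_gt0 : 0 < C by exact: leq_ltn_trans ltbC.
have eq_b : b = b'.
  by rewrite -(modn_small ltbC) -(modn_small ltb'C) -(modnMDl a) eq_ab modnMDl.
split=> //; move/eqP: eq_ab; rewrite eq_b eqn_add2r eqn_pmul2r //.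
by move/eqP.
Qed.

Section Encoding.
Variables (V P : finType) (part : V -> P).

Definition level (x : V) : nat := enum_rank (part x).
Definition key (x : V) : nat := level x * #|V| + enum_rank x.
Definition key_bound : nat := #|P| * #|V|.
Definition weight (e : V * V) : nat :=
  (key_bound - key e.1) * key_bound + key e.2.

Lemma level_eq a b : (level a == level b) = (part a == part b).
Proof. by rewrite /level val_eqE (inj_eq enum_rank_inj). Qed.

Lemma level_lt x : level x < #|P|.
Proof. exact: ltn_ord. Qed.

Lemma vertex_rank_lt (x : V) : enum_rank x < #|V|.
Proof. exact: ltn_ord. Qed.

Lemma key_lt x : key x < key_bound.
Proof.
by have := level_lt x; have := vertex_rank_lt x; rewrite /key /key_bound; nia.
Qed.

Lemma key_inj : injective key.
Proof.
move=> x y /radix_inj[]; try exact: vertex_rank_lt.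
by move=> _ /val_inj/enum_rank_inj.
Qed.

Lemma level_le_of_key x y : key x < key y -> level x <= level y.
Proof.
rewrite /key; have := vertex_rank_lt x; have := vertex_rank_lt y.
case: (leqP (level x) (level y)) => //; nia.
Qed.

Lemma weight_inj : injective weight.
Proof.
move=> [a b] [a' b']; rewrite /weight /=.
case/radix_inj => [||eq_a /key_inj ->]; try exact: key_lt.
by congr pair; apply: key_inj; have := key_lt a; have := key_lt a'; lia.
Qed.

Lemma weight_head u x y : key x < key y -> weight (u, x) < weight (u, y).
Proof. by rewrite /weight /= ltn_add2l. Qed.

Lemma weight_tail v x y : key x < key y -> weight (y, v) < weight (x, v).
Proof.
by move=> lt_xy; have := key_lt v; have := key_lt y; rewrite /weight /=; nia.
Qed.
End Encoding.

Section Construction.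
Variables (V P : finType) (part : V -> P).

Let arc : rel V := level_arc (level part).
Let tau : V * V -> nat := rank_in (arcs arc) (weight part).

Lemma arcsE u v : ((u, v) \in arcs arc) = arc u v.
Proof. by rewrite inE. Qed.

Lemma in_label_lt u x y :
  key part x < key part y -> arc u y -> arc_label arc tau u x < arc_label arc tau u y.
Proof.
move=> lt_xy uy; have Auy : (u, y) \in arcs arc by rewrite arcsE.
rewrite /arc_label uy; case: ifP => [ux|_]; last exact: rank_in_gt0.
exact: rank_in_lt Auy (weight_head _ lt_xy).
Qed.

Lemma out_label_lt v x y :
  key part x < key part y -> arc x v -> arc_label arc tau y v < arc_label arc tau x v.
Proof.
move=> lt_xy xv; have Axv : (x, v) \in arcs arc by rewrite arcsE.
rewrite /arc_label xv; case: ifP => [yv|_]; last exact: rank_in_gt0.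
exact: rank_in_lt Axv (weight_tail _ lt_xy).
Qed.

Lemma in_label_le u x y :
  key part x < key part y -> arc_label arc tau u x <= arc_label arc tau u y.
Proof.
move=> lt_xy; have [uy|nuy] := boolP (arc u y); first exact/ltnW/in_label_lt.
rewrite /arc_label (negbTE nuy) ifN //; apply: contra nuy => ux.
exact: leq_trans ux (level_le_of_key lt_xy).
Qed.

Lemma out_label_le v x y :
  key part x < key part y -> arc_label arc tau y v <= arc_label arc tau x v.
Proof.
move=> lt_xy; have [xv|nxv] := boolP (arc x v); first exact/ltnW/out_label_lt.
rewrite /arc_label (negbTE nxv) ifN //; apply: contra nxv => yv.
exact: leq_ltn_trans (level_le_of_key lt_xy) yv.
Qed.

(* Vertex sums increase strictly with the key, given a vertex z outside the
   part of y: if z lies below y, the arc z -> y makes the in-labels increase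
   strictly; otherwise z lies above x and x -> z makes the out-labels decrease
   strictly. *)
Lemma vsum_key_mono x y z : part z != part y ->
  key part x < key part y -> (vsum arc tau x < vsum arc tau y)%R.
Proof.
move=> zy lt_xy.
have le_in : in_weight arc tau x <= in_weight arc tau y.
  by apply: leq_sum => u _; apply: in_label_le.
have le_out : out_weight arc tau y <= out_weight arc tau x.
  by apply: leq_sum => v _; apply: out_label_le.
have strict : (in_weight arc tau x < in_weight arc tau y)
              || (out_weight arc tau y < out_weight arc tau x).
  have : level part z != level part y by rewrite level_eq.
  rewrite neq_ltn => /orP[lt_zy | lt_yz].
    apply/orP; left.
    exact: sum_ltn_point (fun u => in_label_le u lt_xy) (in_label_lt lt_xy lt_zy).
  have xz : arc x z by exact: leq_ltn_trans (level_le_of_key lt_xy) lt_yz.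
  apply/orP; right.
  exact: sum_ltn_point (fun v => out_label_le v lt_xy) (out_label_lt lt_xy xz).
rewrite !vsumE; lia.
Qed.
End Construction.

Lemma other_part (V P : finType) (part : V -> P) :
  (exists u v : V, part u != part v) -> forall y, exists z, part z != part y.
Proof.
move=> [u [v ne_uv]] y; have [eq_uy|] := eqVneq (part u) (part y).
  by exists v; rewrite -eq_uy eq_sym.
by exists u.
Qed.

Lemma inj_of_key_mono (T : Type) (key : T -> nat) (f : T -> int) :
  injective key -> (forall x y, key x < key y -> (f x < f y)%R) -> injective f.
Proof.
move=> key_inj f_mono x y eq_f; apply: key_inj.
have [lt|lt|//] := ltngtP (key x) (key y); have := f_mono _ _ lt;
  by rewrite eq_f Order.POrderTheory.ltxx.
Qed.

Theorem mainTheorem5 (V P : finType) (part : V -> P) :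
  (exists u v : V, part u != part v) ->
  has_antimagic_orientation (cmp_adj part).
Proof.
move=> two_parts; set arc := level_arc (level part).
exists arc, (rank_in (arcs arc) (weight part)); split.
  by apply: level_orientation => u v; rewrite /cmp_adj level_eq.
split; first exact/rank_is_labeling/weight_inj.
apply: (@inj_of_key_mono _ (key part)) => [|x y]; first exact: key_inj.
by have [z] := other_part two_parts y; apply: vsum_key_mono.
Qed.
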